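(* Let $X,Y$ be compact metric spaces, $(f_n)_{n\ge1}$ a sequence of continuous maps $X\to X$ and $(g_n)_{n\ge1}$ a sequence of continuous maps $Y\to Y$, and suppose there is a continuous surjection $h\colon X\to Y$ with $g_n\circ h=h\circ f_n$ for all $n$ (topological semi-conjugacy). Then $E(Y,g_{1,\infty})$ is a continuous image of $E(X,f_{1,\infty})$. If moreover $h$ is a homeomorphism, then $E(Y,g_{1,\infty})$ and $E(X,f_{1,\infty})$ are topologically isomorphic, i.e. there is a homeomorphism $H\colon E(X,f_{1,\infty})\to E(Y,g_{1,\infty})$ with $H(f_1^p)=g_1^p$ for every $p\in\beta(\mathbb{N})$.
   Context: $\mathbb{N}=\{1,2,\dots\}$, $\beta(\mathbb{N})$ the ultrafilters on $\mathbb{N}$ (principal ones identified with $n\in\mathbb{N}$), $\mathbb{N}^*$ the free ones. For $r\in\mathbb{N}^*$, $r\text{-}\lim_n x_n$ is the unique $y$ with $\{n:x_n\in V\}\in r$ for all neighbourhoods $V$ of $y$. $f_1^n=f_n\circ\cdots\circ f_1$, $f_1^r(x)=r\text{-}\lim_n f_1^n(x)$ for $r\in\mathbb{N}^*$, and $E(X,f_{1,\infty})$ is the closure of $\{f_1^n:n\in\mathbb{N}\}$ in $X^X$ with the pointwise topology (it equals $\{f_1^p:p\in\beta(\mathbb{N})\}$); similarly for $g$. The semigroup operation on these sets is $f_1^p\ast f_1^q:=f_1^{q+p}$, where $q+p=\{A:\{n:\{m:m+n\in A\}\in q\}\in p\}$, so an isomorphism is a homeomorphism compatible with this indexing. *)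

From HB Require Import structures.
From mathcomp Require Import all_boot all_order all_algebra.
From mathcomp Require Import all_classical all_reals.
From mathcomp Require Import topology.
Set Implicit Arguments. Unset Strict Implicit. Unset Printing Implicit Defensive.
Import Order.TTheory GRing.Theory Num.Theory.
Local Open Scope classical_set_scope.

(* Indexing convention: the paper's sequence (f_k)_{k>=1} is represented by
   f : nat -> X -> X with f_k = f (k-1).  Then
   fcomp f n = f n \o ... \o f 0 = f_{n+1} \o ... \o f_1 = f_1^{n+1}. *)
Fixpoint fcomp (X : Type) (f : nat -> X -> X) (n : nat) : X -> X :=
  match n with
  | 0 => f 0
  | m.+1 => f m.+1 \o fcomp f m
  end.

Definition Env (X : topologicalType) (f : nat -> X -> X) : set {ptws X -> X} :=
  closure (range (fun n => (fcomp f n : {ptws X -> X}))).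

(* "F = f_1^p" for an ultrafilter p on N, where f_1^p(x) = p-lim_n f_1^n(x)
   (the p-limit is unique since X is Hausdorff).  Ultrafilters p on nat
   correspond to ultrafilters on N = {1,2,...} via the shift n |-> n+1;
   principal p at n gives fcomp f n = f_1^{n+1}. *)
Definition is_fpow (X : topologicalType) (f : nat -> X -> X) (p : set_system nat)
  (F : X -> X) : Prop :=
  forall x : X, (fun n => fcomp f n x) @ p --> F x.

From HB Require Import structures.
From mathcomp Require Import all_boot all_order all_algebra.
From mathcomp Require Import all_classical all_reals.
From mathcomp Require Import topology.
Set Implicit Arguments. Unset Strict Implicit. Unset Printing Implicit Defensive.
Local Open Scope classical_set_scope.

(* Conjugating by the semi-conjugacy, F |-> h \o F \o s with s a right inverse
   of h, is continuous for the pointwise topology and sends f_1^n to g_1^n.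
   Since the pointwise topology on X^X is compact (Tychonoff) and the one on
   Y^Y is Hausdorff, the image of the closure E(X, f) is a closed set
   containing every g_1^n, hence it is exactly E(Y, g).  Taking p-limits
   commutes with the continuous map h. *)

Definition ptws_conj (A : topologicalType) (B : uniformType)
  (a : B -> A) (b : A -> B) (F : {ptws A -> A}) : {ptws B -> B} := b \o F \o a.

Lemma ptws_conj_continuous (A : topologicalType) (B : uniformType)
  (a : B -> A) (b : A -> B) :
  continuous b -> continuous (ptws_conj a b).
Proof.
move=> bc F; apply/(pointwise_cvgP _ (fmap_filter _ (nbhs_filter F))) => y.
exact: (cvg_comp _ _ (@proj_continuous A (fun=> A) (a y) F) (bc _)).
Qed.

Lemma ptws_conjK (A B : uniformType)
  (a : B -> A) (b : A -> B) (a' : A -> B) (b' : B -> A) :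
  cancel a' a -> cancel b b' -> cancel (ptws_conj a b) (ptws_conj a' b').
Proof. by move=> aK bK F; apply: funext => x; rewrite /ptws_conj /= aK bK. Qed.

Lemma fcomp_semiconj (X Y : Type) (f : nat -> X -> X) (g : nat -> Y -> Y)
  (h : X -> Y) :
  (forall n, g n \o h = h \o f n) -> forall n, fcomp g n \o h = h \o fcomp f n.
Proof.
by move=> hf; elim=> [|n IH] //=; rewrite -compA IH compA hf.
Qed.

Lemma semiconj_inverse (X Y : Type) (f : nat -> X -> X) (g : nat -> Y -> Y)
  (h : X -> Y) (k : Y -> X) :
  cancel h k -> cancel k h ->
  (forall n, g n \o h = h \o f n) -> forall n, f n \o k = k \o g n.
Proof.
move=> hK kK hf n; apply: funext => y.
by have /= := congr1 (fun F => k (F (k y))) (hf n); rewrite hK kK.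
Qed.

Lemma ptws_conj_fcomp (X : topologicalType) (Y : uniformType)
  (f : nat -> X -> X) (g : nat -> Y -> Y) (h : X -> Y) (s : Y -> X) :
  (forall n, g n \o h = h \o f n) -> cancel s h ->
  forall n, ptws_conj s h (fcomp f n) = fcomp g n.
Proof.
move=> hf sK n; rewrite /ptws_conj -(fcomp_semiconj hf).
by apply: funext => y /=; rewrite sK.
Qed.

Lemma image_closure_subset (T U : topologicalType) (phi : T -> U) (A : set T) :
  continuous phi -> phi @` closure A `<=` closure (phi @` A).
Proof.
move=> phic _ [x Ax <-] C /phic Cphix.
have [a [Aa Ca]] := Ax _ Cphix.
by exists (phi a); split => //; exists a.
Qed.

Lemma compact_ptws (X : topologicalType) :
  compact [set: X] -> compact [set: {ptws X -> X}].
Proof.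
by move=> cX; apply: (subclosed_compact _ (tychonoff (fun=> cX))).
Qed.

Lemma compact_Env (X : topologicalType) (f : nat -> X -> X) :
  compact [set: X] -> compact (Env f).
Proof.
move=> cX; apply: (subclosed_compact _ (compact_ptws cX)) => //.
exact: closed_closure.
Qed.

Section EnvImage.
Variables (X Y : topologicalType) (f : nat -> X -> X) (g : nat -> Y -> Y).
Variable phi : {ptws X -> X} -> {ptws Y -> Y}.
Hypothesis phic : continuous phi.
Hypothesis phi_fcomp : forall n, phi (fcomp f n) = fcomp g n.

Lemma image_Env_subset : phi @` Env f `<=` Env g.
Proof.
move=> G /(image_closure_subset phic); apply: closureS.
by move=> _ [_ [n _ <-] <-]; exists n; rewrite ?phi_fcomp.
Qed.

Lemma image_Env : compact [set: X] -> hausdorff_space Y -> phi @` Env f = Env g.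
Proof.
move=> cX hY; apply/seteqP; split; first exact: image_Env_subset.
have clphiE : closed (phi @` Env f).
  apply: compact_closed; first exact: hausdorff_product.
  by apply: continuous_compact; [exact: continuous_subspaceT|exact: compact_Env].
rewrite /Env closureE; apply: smallest_sub => // _ [n _ <-].
by rewrite -phi_fcomp; exists (fcomp f n) => //; apply: subset_closure; exists n.
Qed.

End EnvImage.

Lemma is_fpow_ptws_conj (X : topologicalType) (Y : uniformType)
  (f : nat -> X -> X) (g : nat -> Y -> Y) (h : X -> Y) (s : Y -> X)
  (p : set_system nat) (F : {ptws X -> X}) :
  continuous h -> (forall n, g n \o h = h \o f n) -> cancel s h ->
  is_fpow f p F -> is_fpow g p (ptws_conj s h F).
Proof.
move=> hc hf sK pF y.
have -> : (fun n => fcomp g n y) = h \o (fun n => fcomp f n (s y)).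
  by apply: funext => n; rewrite -(ptws_conj_fcomp hf sK).
exact: (cvg_comp _ _ (pF (s y)) (hc _)).
Qed.

Theorem theorem3p16 (R : realType) (X Y : metricType R)
  (f : nat -> X -> X) (g : nat -> Y -> Y) (h : X -> Y) :
  compact [set: X] -> compact [set: Y] ->
  (forall n, continuous (f n)) -> (forall n, continuous (g n)) ->
  continuous h -> (forall y : Y, exists x : X, h x = y) ->
  (forall n, g n \o h = h \o f n) ->
  (exists H : {ptws X -> X} -> {ptws Y -> Y},
      {within Env f, continuous H} /\ H @` Env f = Env g) /\
  ((exists k : Y -> X, continuous k /\ cancel h k /\ cancel k h) ->
   exists (H : {ptws X -> X} -> {ptws Y -> Y}) (K : {ptws Y -> Y} -> {ptws X -> X}),
     [/\ {within Env f, continuous H}, {within Env g, continuous K},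
         H @` Env f `<=` Env g /\ K @` Env g `<=` Env f,
         {in Env f, cancel H K} /\ {in Env g, cancel K H} &
         forall (p : set_system nat) (F : {ptws X -> X}), UltraFilter p ->
           is_fpow f p F -> is_fpow g p (H F)]).
Proof.
move=> cX _ _ _ hc hsurj hf; split.
  have [s sK] : {s : Y -> X | cancel s h}.
    by exists (fun y => projT1 (cid (hsurj y))) => y; case: cid.
  exists (ptws_conj s h); split.
    exact/continuous_subspaceT/ptws_conj_continuous.
  exact: image_Env (ptws_conj_continuous (a := s) hc) (ptws_conj_fcomp hf sK) cX
    (@metric_hausdorff _ Y).
move=> [k [kc [hK kK]]].
have kf := semiconj_inverse hK kK hf.
exists (ptws_conj k h), (ptws_conj h k); split.
- exact/continuous_subspaceT/ptws_conj_continuous.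
- exact/continuous_subspaceT/ptws_conj_continuous.
- split.
    exact: image_Env_subset (ptws_conj_continuous (a := k) hc) (ptws_conj_fcomp hf kK).
  exact: image_Env_subset (ptws_conj_continuous (a := h) kc) (ptws_conj_fcomp kf hK).
- by split=> F _; apply: ptws_conjK.
- by move=> p F _; apply: is_fpow_ptws_conj.
Qed.
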